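(* Let $\underline R$ be a Green functor and $\underline S$ an $\underline R$-algebra (a Green functor with a Green functor map $\underline R\to\underline S$). Then there is an isomorphism of $\underline S$-modules $\underline{\operatorname{HH}}_1(\underline S/\underline R)\cong\Omega^{1,G}_{\underline S/\underline R}$, given on generators by $s_1\otimes s_2\mapsto s_1\,d(s_2)$ for $s_1,s_2\in\underline S(G/H)$.
   Context: Green functors for a finite group $G$ are commutative monoids in Mackey functors under the box product. $\underline{\operatorname{HH}}_*(\underline S/\underline R)$ is the homology of the cyclic nerve $[k]\mapsto\underline S\boxtimes_{\underline R}\underline S^{\boxtimes_{\underline R}k}$ (faces given by multiplying adjacent factors, the last face moving the last factor to the front and multiplying), so $\underline{\operatorname{HH}}_1(\underline S/\underline R)=(\underline S\boxtimes_{\underline R}\underline S)/\operatorname{im}(b)$ with $b(s_1\otimes s_2\otimes s_3)=s_1s_2\otimes s_3-s_1\otimes s_2s_3+s_3s_1\otimes s_2$. An $\underline R$-derivation $d:\underline S\to\underline M$ into an $\underline S$-module is a map of Mackey functors vanishing on the image of $\underline R$ and satisfying $d(s_1s_2)=s_1d(s_2)+s_2d(s_1)$ at each level. $\Omega^{1,G}_{\underline S/\underline R}$ (genuine Kähler differentials, which for Green functors is $\underline I/\underline I^{>1}$ with $\underline I=\ker(\underline S\boxtimes_{\underline R}\underline S\to\underline S)$) is the $\underline S$-module with universal derivation $d:\underline S\to\Omega^{1,G}_{\underline S/\underline R}$, $d(s)=[s\otimes1-1\otimes s]$, corepresenting $\underline R$-derivations. *)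

From HB Require Import structures.
From mathcomp Require Import all_boot all_order all_algebra all_fingroup.
Set Implicit Arguments. Unset Strict Implicit. Unset Printing Implicit Defensive.
Import GRing.Theory.
Local Open Scope ring_scope.

Section Mackey.
Variables (gT : finGroupType) (G : {group gT}).

(* A Mackey functor for G, indexed by subgroups H of G (values at groups not
   contained in G are irrelevant junk).  [res H K] is restriction from H to
   K <= H, [tr K H] is transfer (induction) from K <= H to H, and
   [cj g H K] is conjugation M(H) -> M(K), meaningful when K = H :^ g. *)
Record mackey_axioms (V : {group gT} -> zmodType)
  (res : forall H K : {group gT}, V H -> V K)
  (tr : forall K H : {group gT}, V K -> V H)
  (cj : forall (g : gT) (H K : {group gT}), V H -> V K) : Prop := {
  res_sub : forall (H K : {group gT}) x y, H \subset G -> K \subset H ->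
    res H K (x - y) = res H K x - res H K y;
  tr_sub : forall (K H : {group gT}) x y, H \subset G -> K \subset H ->
    tr K H (x - y) = tr K H x - tr K H y;
  cj_sub : forall g (H K : {group gT}) x y, H \subset G -> g \in G ->
    K :=: (H :^ g)%g -> cj g H K (x - y) = cj g H K x - cj g H K y;
  res_id : forall (H : {group gT}) x, H \subset G -> res H H x = x;
  tr_id : forall (H : {group gT}) x, H \subset G -> tr H H x = x;
  res_comp : forall (H K L : {group gT}) x, H \subset G -> K \subset H ->
    L \subset K -> res K L (res H K x) = res H L x;
  tr_comp : forall (H K L : {group gT}) x, H \subset G -> K \subset H ->
    L \subset K -> tr K H (tr L K x) = tr L H x;
  cj_inner : forall (H : {group gT}) h x, H \subset G -> h \in H ->
    cj h H H x = x;
  cj_comp : forall g g' (H K L : {group gT}) x, H \subset G -> g \in G ->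
    g' \in G -> K :=: (H :^ g)%g -> L :=: (K :^ g')%g ->
    cj g' K L (cj g H K x) = cj (g * g')%g H L x;
  cj_res : forall g (H K H' K' : {group gT}) x, H \subset G -> K \subset H ->
    g \in G -> H' :=: (H :^ g)%g -> K' :=: (K :^ g)%g ->
    cj g K K' (res H K x) = res H' K' (cj g H H' x);
  cj_tr : forall g (H K H' K' : {group gT}) x, H \subset G -> K \subset H ->
    g \in G -> H' :=: (H :^ g)%g -> K' :=: (K :^ g)%g ->
    cj g H H' (tr K H x) = tr K' H' (cj g K K' x);
  mackey_formula : forall (H K L : {group gT}) (X : {set gT}) x,
    H \subset G -> K \subset H -> L \subset H -> X \subset H ->
    (forall h, h \in H -> exists! y, y \in X /\ h \in (K :* y * L)%g) ->
    res H L (tr K H x) =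
      \sum_(y in X) tr (K :^ y :&: L)%G L
         (cj y (K :&: L :^ y^-1)%G (K :^ y :&: L)%G
            (res K (K :&: L :^ y^-1)%G x)) }.

Record mackey := Mackey {
  mk :> {group gT} -> zmodType;
  mres : forall H K : {group gT}, mk H -> mk K;
  mtr : forall K H : {group gT}, mk K -> mk H;
  mcj : forall (g : gT) (H K : {group gT}), mk H -> mk K;
  mk_ax : mackey_axioms mres mtr mcj }.

(* Green functors (commutative monoids for the box product), written out
   concretely (Dress): levelwise commutative rings, restriction and
   conjugation are ring maps, Frobenius reciprocity for transfers. *)
Record green_axioms (V : {group gT} -> comPzRingType)
  (res : forall H K : {group gT}, V H -> V K)
  (tr : forall K H : {group gT}, V K -> V H)
  (cj : forall (g : gT) (H K : {group gT}), V H -> V K) : Prop := {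
  res1 : forall (H K : {group gT}), H \subset G -> K \subset H -> res H K 1 = 1;
  resM : forall (H K : {group gT}) x y, H \subset G -> K \subset H ->
    res H K (x * y) = res H K x * res H K y;
  cj1 : forall g (H K : {group gT}), H \subset G -> g \in G ->
    K :=: (H :^ g)%g -> cj g H K 1 = 1;
  cjM : forall g (H K : {group gT}) x y, H \subset G -> g \in G ->
    K :=: (H :^ g)%g -> cj g H K (x * y) = cj g H K x * cj g H K y;
  frobenius : forall (H K : {group gT}) (a : V K) (b : V H),
    H \subset G -> K \subset H -> tr K H (a * res H K b) = tr K H a * b }.

Record green := Green {
  gval :> {group gT} -> comPzRingType;
  gres : forall H K : {group gT}, gval H -> gval K;
  gtr : forall K H : {group gT}, gval K -> gval H;
  gcj : forall (g : gT) (H K : {group gT}), gval H -> gval K;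
  g_mackey : mackey_axioms (V := fun H => gval H : zmodType) gres gtr gcj;
  g_green : green_axioms gres gtr gcj }.

Definition green_mackey (S : green) : mackey :=
  @Mackey (fun H => S H : zmodType) (@gres S) (@gtr S) (@gcj S) (g_mackey S).

Definition is_mackey_map (M N : mackey) (h : forall H, M H -> N H) : Prop :=
  [/\ forall (H : {group gT}) x y, H \subset G -> h H (x - y) = h H x - h H y,
      forall (H K : {group gT}) x, H \subset G -> K \subset H ->
        h K (mres K x) = mres K (h H x),
      forall (K H : {group gT}) x, H \subset G -> K \subset H ->
        h H (mtr H x) = mtr H (h K x)
    & forall g (H K : {group gT}) x, H \subset G -> g \in G ->
        K :=: (H :^ g)%g -> h K (mcj g K x) = mcj g K (h H x)].

Definition is_green_map (R S : green) (f : forall H, R H -> S H) : Prop :=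
  [/\ is_mackey_map (M := green_mackey R) (N := green_mackey S) f,
      forall H : {group gT}, H \subset G -> f H 1 = 1
    & forall (H : {group gT}) x y, H \subset G -> f H (x * y) = f H x * f H y].

Definition is_module (S : green) (M : mackey)
  (act : forall H, S H -> M H -> M H) : Prop :=
  
  (forall (H : {group gT}) (a b : S H) m, H \subset G ->
        act H (a - b) m = act H a m - act H b m) /\
  (forall (H : {group gT}) a (m n : M H), H \subset G ->
        act H a (m - n) = act H a m - act H a n) /\
  (forall (H : {group gT}) m, H \subset G -> act H 1 m = m) /\
  (forall (H : {group gT}) a b m, H \subset G ->
        act H (a * b) m = act H a (act H b m)) /\
  (forall (H K : {group gT}) a m, H \subset G -> K \subset H ->
        mres K (act H a m) = act K (gres K a) (mres K m)) /\
  (forall g (H K : {group gT}) a m, H \subset G -> g \in G ->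
        K :=: (H :^ g)%g -> mcj g K (act H a m) = act K (gcj g K a) (mcj g K m)) /\
  (forall (H K : {group gT}) (a : S K) (m : M H), H \subset G -> K \subset H ->
        mtr H (act K a (mres K m)) = act H (gtr H a) m) /\
  (forall (H K : {group gT}) (a : S H) (m : M K), H \subset G -> K \subset H ->
        mtr H (act K (gres K a) m) = act H a (mtr H m)).

Definition is_module_map (S : green) (M N : mackey)
  (actM : forall H, S H -> M H -> M H) (actN : forall H, S H -> N H -> N H)
  (h : forall H, M H -> N H) : Prop :=
  is_mackey_map h /\
  forall (H : {group gT}) a m, H \subset G -> h H (actM H a m) = actN H a (h H m).

Definition is_balanced_pairing (R : green) (M N P : mackey)
  (actM : forall H, R H -> M H -> M H) (actN : forall H, R H -> N H -> N H)
  (nu : forall H, M H -> N H -> P H) : Prop :=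
  
  (forall (H : {group gT}) m m' n, H \subset G ->
        nu H (m - m') n = nu H m n - nu H m' n) /\
  (forall (H : {group gT}) m n n', H \subset G ->
        nu H m (n - n') = nu H m n - nu H m n') /\
  (forall (H : {group gT}) r m n, H \subset G ->
        nu H (actM H r m) n = nu H m (actN H r n)) /\
  (forall (H K : {group gT}) m n, H \subset G -> K \subset H ->
        mres K (nu H m n) = nu K (mres K m) (mres K n)) /\
  (forall g (H K : {group gT}) m n, H \subset G -> g \in G ->
        K :=: (H :^ g)%g -> mcj g K (nu H m n) = nu K (mcj g K m) (mcj g K n)) /\
  (forall (H K : {group gT}) (m : M K) (n : N H), H \subset G -> K \subset H ->
        mtr H (nu K m (mres K n)) = nu H (mtr H m) n) /\
  (forall (H K : {group gT}) (m : M H) (n : N K), H \subset G -> K \subset H ->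
        mtr H (nu K (mres K m) n) = nu H m (mtr H n)).

Definition is_box_product (R : green) (M : mackey)
  (actM : forall H, R H -> M H -> M H) (N : mackey)
  (actN : forall H, R H -> N H -> N H) (T : mackey)
  (mu : forall H, M H -> N H -> T H) : Prop :=
  is_balanced_pairing actM actN mu /\
  forall (P : mackey) (nu : forall H, M H -> N H -> P H),
    is_balanced_pairing actM actN nu ->
    exists h : forall H, T H -> P H,
      [/\ is_mackey_map h,
          forall (H : {group gT}) m n, H \subset G -> h H (mu H m n) = nu H m n
        & forall h' : forall H, T H -> P H, is_mackey_map h' ->
            (forall (H : {group gT}) m n, H \subset G -> h' H (mu H m n) = nu H m n) ->
            forall (H : {group gT}) t, H \subset G -> h' H t = h H t].

(* R-derivations S -> M into an S-module, where f : R -> S is the structure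
   map of the R-algebra S. *)
Definition is_derivation (R S : green) (f : forall H, R H -> S H) (M : mackey)
  (act : forall H, S H -> M H -> M H) (d : forall H, S H -> M H) : Prop :=
  [/\ is_mackey_map (M := green_mackey S) (N := M) d,
      forall (H : {group gT}) r, H \subset G -> d H (f H r) = 0
    & forall (H : {group gT}) a b, H \subset G ->
        d H (a * b) = act H a (d H b) + act H b (d H a)].

Definition is_kaehler (R S : green) (f : forall H, R H -> S H) (Om : mackey)
  (actO : forall H, S H -> Om H -> Om H) (d : forall H, S H -> Om H) : Prop :=
  [/\ is_module actO, is_derivation f actO d &
  forall (N : mackey) (actN : forall H, S H -> N H -> N H)
         (delta : forall H, S H -> N H),
    is_module actN -> is_derivation f actN delta ->
    exists h : forall H, Om H -> N H,
      [/\ is_module_map actO actN h,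
          forall (H : {group gT}) a, H \subset G -> h H (d H a) = delta H a
        & forall h' : forall H, Om H -> N H, is_module_map actO actN h' ->
            (forall (H : {group gT}) a, H \subset G -> h' H (d H a) = delta H a) ->
            forall (H : {group gT}) t, H \subset G -> h' H t = h H t]].

End Mackey.

(* The pairing (s1, s2) |-> s1 d(s2) is R-balanced because d is an R-derivation, so it
   induces a Mackey map phi : S ⊠_R S -> Ω; phi is S-linear and, by the Leibniz rule,
   kills the Hochschild boundaries b(s1 ⊗ s2 ⊗ s3).  Conversely s |-> [1 ⊗ s] is an
   R-derivation into HH_1 = (S ⊠_R S) / im b, giving psi : Ω -> HH_1.  The composites
   fix the generators d s and s1 ⊗ s2, so by the uniqueness parts of the two universal
   properties phi induces an isomorphism HH_1 ≅ Ω.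
   Facts about all elements of a box product reduce to transfers of elementary tensors:
   by the double coset formula these span a sub-Mackey functor, and a sub-Mackey functor
   containing every elementary tensor is everything, since the quotient map by it and
   the zero map agree on elementary tensors. *)
From HB Require Import structures.
From mathcomp Require Import all_boot all_order all_algebra all_fingroup.
From mathcomp Require Import boolp.
Import GRing.Theory.
Local Open Scope ring_scope.
Local Open Scope quotient_scope.
Set Implicit Arguments.

Section SubtractiveMorphism.
Variables (U V : zmodType) (f : U -> V).
Hypothesis fB : {morph f : x y / x - y}.

Lemma subr_morph0 : f 0 = 0.
Proof. by rewrite -(subrr 0) fB subrr. Qed.

Lemma subr_morphN x : f (- x) = - f x.
Proof. by rewrite -sub0r fB subr_morph0 sub0r. Qed.

Lemma subr_morphD x y : f (x + y) = f x + f y.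
Proof. by rewrite -[y]opprK fB !subr_morphN opprK. Qed.

End SubtractiveMorphism.

Arguments subr_morph0 {U V f}.
Arguments subr_morphN {U V f}.
Arguments subr_morphD {U V f}.

Section DoubleCosets.
Variable gT : finGroupType.
Implicit Types (K L : {group gT}) (h k l y : gT).
Local Open Scope group_scope.

Lemma dcosetE K L h k l : k \in K -> l \in L -> K :* (k * h * l) * L = K :* h * L.
Proof. by move=> kK lL; rewrite !rcosetM (rcoset_id kK) -{2}(lcoset_id lL) mulgA. Qed.

Lemma dcosetP K L h y :
  reflect (exists k l, [/\ k \in K, l \in L & y = k * h * l]) (y \in K :* h * L).
Proof.
apply: (iffP idP) => [/mulsgP[x l /rcosetP[k kK ->] lL ->] | [k [l [kK lL ->]]]].
  by exists k, l.
by rewrite mem_mulg // mem_rcoset mulgK.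
Qed.

Lemma dcoset_eq K L h y : y \in K :* h * L -> K :* y * L = K :* h * L.
Proof. by case/dcosetP=> k [l [kK lL ->]]; rewrite dcosetE. Qed.

Lemma dcoset_refl K L h : h \in K :* h * L.
Proof. by apply/dcosetP; exists 1, 1; rewrite !group1 mul1g mulg1. Qed.

Lemma dcoset_transversal {H K L : {group gT}} : K \subset H -> L \subset H ->
  exists2 X : {set gT}, X \subset H &
    forall h, h \in H -> exists! y, y \in X /\ h \in K :* y * L.
Proof.
move=> sKH sLH; pose X := [set repr (K :* h * L) | h in H].
have reprE h : K :* repr (K :* h * L) * L = K :* h * L.
  exact/dcoset_eq/mem_repr/dcoset_refl.
exists X.
  apply/subsetP=> _ /imsetP[h hH ->].
  have /dcosetP[k [l [kK lL ->]]] := mem_repr _ (dcoset_refl K L h).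
  by rewrite !groupM // ?(subsetP sKH _ kK) ?(subsetP sLH _ lL).
move=> h hH; exists (repr (K :* h * L)); split.
  by split; [apply/imsetP; exists h | rewrite reprE dcoset_refl].
by move=> _ [/imsetP[h' _ ->]]; rewrite reprE => /dcoset_eq ->.
Qed.

End DoubleCosets.

Lemma conj_subG {gT : finGroupType} {G H K : {group gT}} {g : gT} :
  H \subset G -> g \in G -> K :=: (H :^ g)%g -> K \subset G.
Proof. by move=> sHG gG ->; rewrite -(conjGid gG) conjSg. Qed.

Section MackeyFunctors.
Variables (gT : finGroupType) (G : {group gT}).
Implicit Types (H K : {group gT}) (M N P : mackey G).

Lemma mres0 M H K : H \subset G -> K \subset H -> mres K (0 : M H) = 0.
Proof. by move=> sHG sKH; apply: subr_morph0 => x y; apply: (res_sub (mk_ax M)). Qed.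

Lemma mtr0 M K H : H \subset G -> K \subset H -> mtr H (0 : M K) = 0.
Proof. by move=> sHG sKH; apply: subr_morph0 => x y; apply: (tr_sub (mk_ax M)). Qed.

Lemma mcj0 M g H K : H \subset G -> g \in G -> K :=: (H :^ g)%g -> mcj g K (0 : M H) = 0.
Proof. by move=> sHG gG defK; apply: subr_morph0 => x y; apply: (cj_sub (mk_ax M)). Qed.

Section MackeyMap.
Variables (M N : mackey G) (h : forall H, M H -> N H).
Hypothesis hM : is_mackey_map h.

Lemma mackey_mapB H : H \subset G -> {morph h H : x y / x - y}.
Proof. by case: hM => hB _ _ _ sHG x y; apply: hB. Qed.

Lemma mackey_map0 H : H \subset G -> h H 0 = 0.
Proof. by move/mackey_mapB/subr_morph0. Qed.

Lemma mackey_mapN H x : H \subset G -> h H (- x) = - h H x.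
Proof. by move/mackey_mapB/subr_morphN. Qed.

Lemma mackey_mapD H x y : H \subset G -> h H (x + y) = h H x + h H y.
Proof. by move/mackey_mapB/subr_morphD. Qed.

End MackeyMap.

Lemma mackey_map_comp M N P (h1 : forall H, M H -> N H) (h2 : forall H, N H -> P H) :
  is_mackey_map h1 -> is_mackey_map h2 -> is_mackey_map (fun H x => h2 H (h1 H x)).
Proof.
case=> hB hres htr hcj [kB kres ktr kcj]; split=> *.
- by rewrite hB ?kB.
- by rewrite hres ?kres.
- by rewrite htr ?ktr.
- by rewrite hcj ?kcj.
Qed.

Lemma zero_mackey_map M N : is_mackey_map (fun H (_ : M H) => 0 : N H).
Proof. by split=> *; rewrite ?subr0 ?mres0 ?mtr0 ?mcj0. Qed.

End MackeyFunctors.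

Section Modules.
Variables (gT : finGroupType) (G : {group gT}) (S : green G) (M : mackey G).
Variable act : forall H : {group gT}, S H -> M H -> M H.
Hypothesis hact : is_module act.
Implicit Types H K : {group gT}.

Lemma modactBl H a b m : H \subset G -> act H (a - b) m = act H a m - act H b m.
Proof. by case: hact => hB _ sHG; apply: hB. Qed.

Lemma modactBr H a : H \subset G -> {morph act H a : m n / m - n}.
Proof. by case: hact => _ [hB _] sHG m n; apply: hB. Qed.

Lemma modact0r H a : H \subset G -> act H a 0 = 0.
Proof. by move/modactBr/subr_morph0. Qed.

Lemma modactDr H a m n : H \subset G -> act H a (m + n) = act H a m + act H a n.
Proof. by move/modactBr/subr_morphD. Qed.

Lemma modact1 H m : H \subset G -> act H 1 m = m.
Proof. by case: hact => _ [_ [h1 _]]; apply: h1. Qed.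

Lemma modactM H a b m : H \subset G -> act H (a * b) m = act H a (act H b m).
Proof. by case: hact => _ [_ [_ [hM _]]]; apply: hM. Qed.

Lemma mres_modact H K a m : H \subset G -> K \subset H ->
  mres K (act H a m) = act K (gres K a) (mres K m).
Proof. by case: hact => _ [_ [_ [_ [hres _]]]]; apply: hres. Qed.

Lemma mcj_modact g H K a m : H \subset G -> g \in G -> K :=: (H :^ g)%g ->
  mcj g K (act H a m) = act K (gcj g K a) (mcj g K m).
Proof. by case: hact => _ [_ [_ [_ [_ [hcj _]]]]]; apply: hcj. Qed.

Lemma mtr_modact_res H K (a : S K) (m : M H) : H \subset G -> K \subset H ->
  mtr H (act K a (mres K m)) = act H (gtr H a) m.
Proof. by case: hact => _ [_ [_ [_ [_ [_ [htr _]]]]]]; apply: htr. Qed.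

Lemma mtr_res_modact H K (a : S H) (m : M K) : H \subset G -> K \subset H ->
  mtr H (act K (gres K a) m) = act H a (mtr H m).
Proof. by case: hact => _ [_ [_ [_ [_ [_ [_ htr]]]]]]; apply: htr. Qed.

End Modules.

Section Pairings.
Variables (gT : finGroupType) (G : {group gT}) (R : green G) (M N P : mackey G).
Variables (actM : forall H : {group gT}, R H -> M H -> M H)
          (actN : forall H : {group gT}, R H -> N H -> N H).
Variable nu : forall H : {group gT}, M H -> N H -> P H.
Hypothesis hnu : is_balanced_pairing actM actN nu.
Implicit Types H K : {group gT}.

Lemma pairBl H n : H \subset G -> {morph nu H ^~ n : m m' / m - m'}.
Proof. by case: hnu => hB _ sHG m m'; apply: hB. Qed.

Lemma pairBr H m : H \subset G -> {morph nu H m : n n' / n - n'}.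
Proof. by case: hnu => _ [hB _] sHG n n'; apply: hB. Qed.

Lemma pair_act H r m n : H \subset G -> nu H (actM H r m) n = nu H m (actN H r n).
Proof. by case: hnu => _ [_ [hact _]]; apply: hact. Qed.

Lemma mres_pair H K m n : H \subset G -> K \subset H ->
  mres K (nu H m n) = nu K (mres K m) (mres K n).
Proof. by case: hnu => _ [_ [_ [hres _]]]; apply: hres. Qed.

Lemma mcj_pair g H K m n : H \subset G -> g \in G -> K :=: (H :^ g)%g ->
  mcj g K (nu H m n) = nu K (mcj g K m) (mcj g K n).
Proof. by case: hnu => _ [_ [_ [_ [hcj _]]]]; apply: hcj. Qed.

Lemma mtr_pair_resr H K (m : M K) (n : N H) : H \subset G -> K \subset H ->
  mtr H (nu K m (mres K n)) = nu H (mtr H m) n.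
Proof. by case: hnu => _ [_ [_ [_ [_ [htr _]]]]]; apply: htr. Qed.

Lemma mtr_pair_resl H K (m : M H) (n : N K) : H \subset G -> K \subset H ->
  mtr H (nu K (mres K m) n) = nu H m (mtr H n).
Proof. by case: hnu => _ [_ [_ [_ [_ [_ htr]]]]]; apply: htr. Qed.

Lemma balanced_pairing_comp (Q : mackey G) (h : forall H, P H -> Q H) :
  is_mackey_map h -> is_balanced_pairing actM actN (fun H m n => h H (nu H m n)).
Proof.
move=> hM; have [_ hres htr hcj] := hM.
do !split=> *.
- by rewrite pairBl ?(mackey_mapB hM).
- by rewrite pairBr ?(mackey_mapB hM).
- by rewrite pair_act.
- by rewrite -hres ?mres_pair.
- by rewrite -hcj ?mcj_pair.
- by rewrite -htr ?mtr_pair_resr.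
- by rewrite -htr ?mtr_pair_resl.
Qed.

End Pairings.

Section QuotientMackey.
Variables (gT : finGroupType) (G : {group gT}) (M : mackey G).
Implicit Types H K : {group gT}.

Record is_sub_mackey (P : forall H : {group gT}, M H -> Prop) : Prop := SubMackey {
  sub_mackey0 : forall H, H \subset G -> P H 0;
  sub_mackeyB : forall H x y, H \subset G -> P H x -> P H y -> P H (x - y);
  sub_mackey_res : forall H K x, H \subset G -> K \subset H -> P H x -> P K (mres K x);
  sub_mackey_tr : forall K H x, H \subset G -> K \subset H -> P K x -> P H (mtr H x);
  sub_mackey_cj : forall g H K x, H \subset G -> g \in G -> K :=: (H :^ g)%g ->
    P H x -> P K (mcj g K x) }.

Variable P : forall H : {group gT}, M H -> Prop.
Hypothesis hP : is_sub_mackey P.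

(* Outside [G] the predicate is trivially true, so that every [sub_mackey_mem H]
   is an additive subgroup, as the quotient construction requires. *)
Definition sub_mackey_mem H : {pred M H} := fun x => `[< H \subset G -> P H x >].

Lemma sub_mackey_mem_zmod_closed H : zmod_closed (sub_mackey_mem H).
Proof.
split; first by apply/asboolP => /(sub_mackey0 hP).
move=> x y /asboolP Px /asboolP Py; apply/asboolP => sHG.
exact: (sub_mackeyB hP) (Px sHG) (Py sHG).
Qed.

HB.instance Definition _ H :=
  GRing.isZmodClosed.Build (M H) (sub_mackey_mem H) (sub_mackey_mem_zmod_closed H).

Definition quot_mk H : zmodType := Quotient.quot (sub_mackey_mem H).
Local Notation qpi H := (\pi_(quot_mk H)).
Local Notation qrepr := generic_quotient.repr.

Lemma qpiB H : {morph qpi H : x y / x - y}.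
Proof. exact: raddfB. Qed.

Lemma qpiD H : {morph qpi H : x y / x + y}.
Proof. exact: raddfD. Qed.

Lemma qpi_eq0 H x : H \subset G -> qpi H x = 0 <-> P H x.
Proof.
move=> sHG; rewrite -(raddf0 (qpi H)); split.
  by move/eqP; rewrite -Quotient.idealrBE subr0 => /asboolP; apply.
by move=> Px; apply/eqP; rewrite -Quotient.idealrBE subr0; apply/asboolP.
Qed.

Lemma qpi_repr H x : H \subset G -> P H (qrepr (qpi H x) - x).
Proof. by move=> sHG; apply/qpi_eq0; rewrite // qpiB reprK subrr. Qed.

Definition qlift {H K} (F : M H -> M K) (q : quot_mk H) : quot_mk K := qpi K (F (qrepr q)).

Lemma qliftE H K (F : M H -> M K) x : H \subset G -> K \subset G ->
  {morph F : y z / y - z} -> (forall y, P H y -> P K (F y)) ->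
  qlift F (qpi H x) = qpi K (F x).
Proof.
move=> sHG sKG FB FP; apply/eqP; rewrite -subr_eq0 -qpiB -FB.
by apply/eqP/(qpi_eq0 _ _ sKG)/FP/qpi_repr.
Qed.

Definition qres H K := qlift (fun x : M H => mres K x).
Definition qtr K H := qlift (fun x : M K => mtr H x).
Definition qcj g H K := qlift (fun x : M H => mcj g K x).

Lemma qresE {H K} x : H \subset G -> K \subset H -> qres K (qpi H x) = qpi K (mres K x).
Proof.
move=> sHG sKH; apply: qliftE; first by [].
- exact: subset_trans sKH sHG.
- by move=> y z; apply: (res_sub (mk_ax M)).
- by move=> y; apply: (sub_mackey_res hP).
Qed.

Lemma qtrE {K H} x : H \subset G -> K \subset H -> qtr H (qpi K x) = qpi H (mtr H x).
Proof.
move=> sHG sKH; apply: qliftE; last by move=> y; apply: (sub_mackey_tr hP).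
- exact: subset_trans sKH sHG.
- by [].
- by move=> y z; apply: (tr_sub (mk_ax M)).
Qed.

Lemma qcjE {g H K} x : H \subset G -> g \in G -> K :=: (H :^ g)%g ->
  qcj g K (qpi H x) = qpi K (mcj g K x).
Proof.
move=> sHG gG defK; apply: qliftE; last by move=> y; apply: (sub_mackey_cj hP).
- by [].
- exact: conj_subG defK.
- by move=> y z; apply: (cj_sub (mk_ax M)).
Qed.

Lemma quot_mackey_axioms : mackey_axioms G qres qtr qcj.
Proof.
have M_ax := mk_ax M; split.
- move=> H K + + sHG sKH; do 2!elim/quotW=> ?.
  by rewrite -qpiB !qresE // (res_sub M_ax) // qpiB.
- move=> K H + + sHG sKH; do 2!elim/quotW=> ?.
  by rewrite -qpiB !qtrE // (tr_sub M_ax) // qpiB.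
- move=> g H K + + sHG gG defK; do 2!elim/quotW=> ?.
  by rewrite -qpiB !qcjE // (cj_sub M_ax) // qpiB.
- by move=> H + sHG; elim/quotW=> x; rewrite qresE // (res_id M_ax).
- by move=> H + sHG; elim/quotW=> x; rewrite qtrE // (tr_id M_ax).
- move=> H K L + sHG sKH sLK; elim/quotW=> x.
  have sKG := subset_trans sKH sHG; have sLH := subset_trans sLK sKH.
  by rewrite (qresE x sHG sKH) !qresE // (res_comp M_ax).
- move=> H K L + sHG sKH sLK; elim/quotW=> x.
  have sKG := subset_trans sKH sHG; have sLH := subset_trans sLK sKH.
  by rewrite (qtrE x sKG sLK) !qtrE // (tr_comp M_ax).
- move=> H h + sHG hH; elim/quotW=> x.
  by rewrite qcjE ?(cj_inner M_ax) ?(subsetP sHG) ?conjGid.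
- move=> g g' H K L + sHG gG g'G defK defL; elim/quotW=> x.
  have sKG := conj_subG sHG gG defK.
  have defL' : L :=: (H :^ (g * g'))%g by rewrite defL defK conjsgM.
  by rewrite (qcjE x sHG gG defK) !qcjE ?groupM // (cj_comp M_ax).
- move=> g H K H' K' + sHG sKH gG defH' defK'; elim/quotW=> x.
  have sH'G := conj_subG sHG gG defH'.
  have sKG := subset_trans sKH sHG.
  have sK'H' : K' \subset H' by rewrite defH' defK' conjSg.
  rewrite (qresE x sHG sKH) (qcjE x sHG gG defH') qcjE // qresE //.
  by rewrite (cj_res M_ax _ sHG sKH gG defH' defK').
- move=> g H K H' K' + sHG sKH gG defH' defK'; elim/quotW=> x.
  have sH'G := conj_subG sHG gG defH'.
  have sKG := subset_trans sKH sHG.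
  have sK'H' : K' \subset H' by rewrite defH' defK' conjSg.
  rewrite (qtrE x sHG sKH) (qcjE x sKG gG defK') qcjE // qtrE //.
  by rewrite (cj_tr M_ax _ sHG sKH gG defH' defK').
- move=> H K L X + sHG sKH sLH sXH defX; elim/quotW=> x.
  rewrite qtrE // qresE // (mackey_formula M_ax _ sHG sKH sLH sXH defX).
  rewrite (big_morph _ (raddfD (qpi L)) (raddf0 (qpi L))); apply: eq_bigr => y yX.
  have yG : y \in G by apply/(subsetP sHG)/(subsetP sXH).
  have sKG := subset_trans sKH sHG.
  have sKyK : (K :&: L :^ y^-1)%G \subset K by apply: subsetIl.
  rewrite qresE // qcjE ?qtrE ?(subset_trans sKyK) ?(subset_trans sLH) //=.
    exact: subsetIr.
  by rewrite conjIg conjsgKV.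
Qed.

Definition quot_mackey : mackey G := Mackey quot_mackey_axioms.

Lemma quot_pi_mackey_map : is_mackey_map (N := quot_mackey) (fun H => qpi H).
Proof. by split=> *; rewrite /= ?qpiB ?qresE ?qtrE ?qcjE. Qed.

Section QuotientModule.
Variables (S : green G) (act : forall H : {group gT}, S H -> M H -> M H).
Hypothesis hact : is_module act.
Hypothesis Pact : forall H (a : S H) x, H \subset G -> P H x -> P H (act H a x).

Definition quot_act H (a : S H) := qlift (act H a).

Lemma quot_actE H a x : H \subset G -> quot_act a (qpi H x) = qpi H (act H a x).
Proof. by move=> sHG; apply: qliftE => // [|y]; [apply: modactBr | apply: Pact]. Qed.

Lemma quot_module : is_module (M := quot_mackey) quot_act.
Proof.
do !split.
- move=> H a b + sHG; elim/quotW=> x.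
  by rewrite !quot_actE // (modactBl hact) // qpiB.
- move=> H a + + sHG; do 2!elim/quotW=> ?.
  by rewrite -qpiB !quot_actE // (modactBr hact) // qpiB.
- by move=> H + sHG; elim/quotW=> x; rewrite quot_actE // (modact1 hact).
- move=> H a b + sHG; elim/quotW=> x.
  by rewrite [quot_act b _]quot_actE // !quot_actE // (modactM hact).
- move=> H K a + sHG sKH; elim/quotW=> x; have sKG := subset_trans sKH sHG.
  by rewrite /= quot_actE // !qresE // quot_actE // (mres_modact hact).
- move=> g H K a + sHG gG defK; elim/quotW=> x; have sKG := conj_subG sHG gG defK.
  by rewrite /= quot_actE // !qcjE // quot_actE // (mcj_modact hact).
- move=> H K a + sHG sKH; elim/quotW=> x; have sKG := subset_trans sKH sHG.
  by rewrite /= qresE // quot_actE // !qtrE // quot_actE // (mtr_modact_res hact).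
- move=> H K a + sHG sKH; elim/quotW=> x; have sKG := subset_trans sKH sHG.
  by rewrite /= quot_actE // (qtrE x sHG sKH) quot_actE // qtrE // (mtr_res_modact hact).
Qed.

End QuotientModule.
Arguments quot_act {S} act H a q.

Section QuotientLift.
Variables (N : mackey G) (h : forall H : {group gT}, M H -> N H).
Hypotheses (hM : is_mackey_map h) (hP0 : forall H x, H \subset G -> P H x -> h H x = 0).

Definition quot_lift H (q : quot_mk H) : N H := h H (qrepr q).

Lemma quot_liftE H x : H \subset G -> quot_lift (qpi H x) = h H x.
Proof.
move=> sHG; apply/eqP; rewrite -subr_eq0 /quot_lift -(mackey_mapB hM) //.
exact/eqP/hP0/qpi_repr.
Qed.

Lemma quot_lift_mackey_map : is_mackey_map (M := quot_mackey) quot_lift.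
Proof.
have [_ hres htr hcj] := hM; split.
- move=> H + + sHG; do 2!elim/quotW=> ?.
  by rewrite -qpiB !quot_liftE // (mackey_mapB hM).
- move=> H K + sHG sKH; elim/quotW=> x; have sKG := subset_trans sKH sHG.
  by rewrite /= qresE // !quot_liftE // hres.
- move=> K H + sHG sKH; elim/quotW=> x; have sKG := subset_trans sKH sHG.
  by rewrite /= qtrE // !quot_liftE // htr.
- move=> g H K + sHG gG defK; elim/quotW=> x; have sKG := conj_subG sHG gG defK.
  by rewrite /= qcjE // !quot_liftE // hcj.
Qed.

Lemma quot_lift_module_map (S : green G) (actM : forall H : {group gT}, S H -> M H -> M H)
    (actN : forall H : {group gT}, S H -> N H -> N H) :
  is_module actM -> (forall H (a : S H) x, H \subset G -> P H x -> P H (actM H a x)) ->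
  (forall H a x, H \subset G -> h H (actM H a x) = actN H a (h H x)) ->
  is_module_map (M := quot_mackey) (quot_act actM) actN quot_lift.
Proof.
move=> hact Pact hact_h; split=> [|H a + sHG]; first exact: quot_lift_mackey_map.
by elim/quotW=> x; rewrite quot_actE // !quot_liftE // hact_h.
Qed.

End QuotientLift.

End QuotientMackey.

Arguments is_sub_mackey {gT G M} P.
Arguments quot_lift {gT G M P hP N} h H q.
Arguments quot_act {gT G M P hP S} act H a q.

Section BoxProducts.
Variables (gT : finGroupType) (G : {group gT}) (R : green G) (M N T : mackey G).
Variables (actM : forall H : {group gT}, R H -> M H -> M H)
          (actN : forall H : {group gT}, R H -> N H -> N H).
Variable mu : forall H : {group gT}, M H -> N H -> T H.
Hypothesis hbox : is_box_product actM actN mu.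
Implicit Types H K : {group gT}.

Lemma box_map_ext (P : mackey G) (h1 h2 : forall H, T H -> P H) :
  is_mackey_map h1 -> is_mackey_map h2 ->
  (forall H m n, H \subset G -> h1 H (mu H m n) = h2 H (mu H m n)) ->
  forall H t, H \subset G -> h1 H t = h2 H t.
Proof.
move=> h1M h2M e12 H t sHG; have [bal univ] := hbox.
have [h [_ _ h_uniq]] := univ P _ (balanced_pairing_comp bal h1M).
by rewrite (h_uniq h1) // (h_uniq h2) // => K m n sKG; rewrite e12.
Qed.

Lemma box_sub_mackey_all (P : forall H, T H -> Prop) : is_sub_mackey P ->
  (forall H m n, H \subset G -> P H (mu H m n)) -> forall H t, H \subset G -> P H t.
Proof.
move=> hP Pmu H t sHG; apply/(qpi_eq0 hP _ _ sHG).
apply: (box_map_ext (quot_pi_mackey_map hP) (zero_mackey_map _ _)) => // K m n sKG.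
exact/(qpi_eq0 hP _ _ sKG)/Pmu.
Qed.

Inductive box_span : forall H, T H -> Prop :=
| box_span0 H : box_span H 0
| box_spanB H x y : box_span H x -> box_span H y -> box_span H (x - y)
| box_span_tr H K m n : K \subset H -> box_span H (mtr H (mu K m n)).

Lemma box_spanD H x y : box_span H x -> box_span H y -> box_span H (x + y).
Proof.
move=> sx sy; have -> : x + y = x - (0 - y) by rewrite sub0r opprK.
by apply: box_spanB => //; apply: box_spanB => //; apply: box_span0.
Qed.

Lemma box_span_sub_mackey : is_sub_mackey box_span.
Proof.
have [bal _] := hbox; have T_ax := mk_ax T.
split.
- by move=> *; apply: box_span0.
- by move=> *; apply: box_spanB.
- move=> H L x sHG sLH sx.
  elim: sx L sHG sLH => {H x} [H|H x y _ IHx _ IHy|H K m n sKH] L sHG sLH.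
  + by rewrite mres0 //; apply: box_span0.
  + by rewrite (res_sub T_ax) //; apply: box_spanB; [apply: IHx | apply: IHy].
  have [X sXH defX] := dcoset_transversal sKH sLH.
  (* The double coset formula writes the restriction as a sum of transfers. *)
  rewrite (mackey_formula T_ax _ sHG sKH sLH sXH defX).
  apply: (big_ind (box_span L)); [exact: box_span0 | exact: box_spanD |] => y yX.
  have yG : y \in G by apply/(subsetP sHG)/(subsetP sXH).
  have sKG := subset_trans sKH sHG.
  have sKyG : (K :&: L :^ y^-1)%G \subset G.
    exact: subset_trans (subsetIl _ _) sKG.
  have defKy : (K :^ y :&: L)%G :=: ((K :&: L :^ y^-1) :^ y)%g.
    by rewrite /= conjIg conjsgKV.
  rewrite (mres_pair bal) ?subsetIl // (mcj_pair bal) //.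
  by apply: box_span_tr; apply: subsetIr.
- move=> K H x sHG sKH sx.
  elim: sx H sHG sKH => {K x} [K|K x y _ IHx _ IHy|K L m n sLK] H sHG sKH.
  + by rewrite mtr0 //; apply: box_span0.
  + by rewrite (tr_sub T_ax) //; apply: box_spanB; [apply: IHx | apply: IHy].
  by rewrite (tr_comp T_ax) //; apply: box_span_tr; apply: subset_trans sKH.
- move=> g H K x sHG gG defK sx.
  elim: sx K sHG defK => {H x} [H|H x y _ IHx _ IHy|H L m n sLH] K sHG defK.
  + by rewrite mcj0 //; apply: box_span0.
  + by rewrite (cj_sub T_ax) //; apply: box_spanB; [apply: IHx | apply: IHy].
  have sLG := subset_trans sLH sHG.
  rewrite (cj_tr T_ax (K' := (L :^ g)%G) _ sHG sLH gG defK) // (mcj_pair bal) //.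
  by apply: box_span_tr; rewrite defK conjSg.
Qed.

Lemma box_span_all {H} t : H \subset G -> box_span H t.
Proof.
apply: (box_sub_mackey_all box_span_sub_mackey) => K m n sKG.
by rewrite -[mu K m n](tr_id (mk_ax T) _ sKG); apply: box_span_tr.
Qed.

Lemma box_ind (Q : forall H, T H -> Prop) :
  (forall H, H \subset G -> Q H 0) ->
  (forall H x y, H \subset G -> Q H x -> Q H y -> Q H (x - y)) ->
  (forall H K m n, H \subset G -> K \subset H -> Q H (mtr H (mu K m n))) ->
  forall H t, H \subset G -> Q H t.
Proof.
move=> Q0 QB Qtr H t sHG; have span_t := box_span_all t sHG.
elim: span_t sHG => {H t} [H|H x y _ IHx _ IHy|H K m n sKH] sHG.
- exact: Q0.
- by apply: QB => //; [apply: IHx | apply: IHy].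
- exact: Qtr.
Qed.

End BoxProducts.

Section Derivations.
Variables (gT : finGroupType) (G : {group gT}) (R S : green G).
Variable f : forall H : {group gT}, R H -> S H.
Implicit Types (H K : {group gT}) (N P : mackey G).

Lemma module_map_comp N P (actN : forall H, S H -> N H -> N H)
    (actP : forall H, S H -> P H -> P H) (Q : mackey G) (actQ : forall H, S H -> Q H -> Q H)
    (h1 : forall H, N H -> P H) (h2 : forall H, P H -> Q H) :
  is_module_map actN actP h1 -> is_module_map actP actQ h2 ->
  is_module_map actN actQ (fun H x => h2 H (h1 H x)).
Proof.
move=> [h1M h1act] [h2M h2act]; split=> [|H a x sHG]; first exact: mackey_map_comp.
by rewrite h1act ?h2act.
Qed.

Lemma module_map_id N (actN : forall H, S H -> N H -> N H) :
  is_module_map actN actN (fun H (x : N H) => x).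
Proof. by do !split. Qed.

Lemma derivation_comp N P (actN : forall H, S H -> N H -> N H)
    (actP : forall H, S H -> P H -> P H) (d : forall H, S H -> N H) (h : forall H, N H -> P H) :
  is_derivation f actN d -> is_module_map actN actP h ->
  is_derivation f actP (fun H a => h H (d H a)).
Proof.
move=> [dM dR dL] [hM hact]; split=> [|H r sHG|H a b sHG].
- exact: mackey_map_comp.
- by rewrite dR ?(mackey_map0 hM).
- by rewrite dL ?(mackey_mapD hM) ?hact.
Qed.

Lemma derivation_pairing_balanced N (actN : forall H, S H -> N H -> N H)
    (d : forall H, S H -> N H) :
  is_module actN -> is_derivation f actN d ->
  is_balanced_pairing (M := green_mackey S) (N := green_mackey S)
    (fun H r s => f H r * s) (fun H r s => f H r * s) (fun H a b => actN H a (d H b)).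
Proof.
move=> hact [dM dR dL]; have [_ dres dtr dcj] := dM.
do !split=> *.
- exact: (modactBl hact).
- by rewrite /= (mackey_mapB dM) ?(modactBr hact).
- by rewrite /= dL ?dR ?(modact0r hact) ?addr0 -?(modactM hact) ?[_ * f _ _]mulrC.
- by rewrite (mres_modact hact) ?dres.
- by rewrite (mcj_modact hact) ?dcj.
- by rewrite /= dres ?(mtr_modact_res hact).
- by rewrite /= (mtr_res_modact hact) ?dtr.
Qed.

Lemma kaehler_map_ext (Om : mackey G) (actO : forall H, S H -> Om H -> Om H)
    (d : forall H, S H -> Om H) N (actN : forall H, S H -> N H -> N H)
    (h1 h2 : forall H, Om H -> N H) :
  is_kaehler f actO d -> is_module actN ->
  is_module_map actO actN h1 -> is_module_map actO actN h2 ->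
  (forall H a, H \subset G -> h1 H (d H a) = h2 H (d H a)) ->
  forall H y, H \subset G -> h1 H y = h2 H y.
Proof.
move=> [_ derO univO] hactN h1M h2M e12 H y sHG.
have [h [_ _ h_uniq]] := univO N actN _ hactN (derivation_comp derO h1M).
by rewrite (h_uniq h1) // (h_uniq h2) // => K a sKG; rewrite e12.
Qed.

End Derivations.

Arguments module_map_id {gT G S N} actN.

Section HochschildKaehler.
Variables (gT : finGroupType) (G : {group gT}) (R S : green G).
Variable f : forall H : {group gT}, R H -> S H.
Variables (T : mackey G) (mu : forall H : {group gT}, S H -> S H -> T H).
Hypothesis hT : is_box_product (M := green_mackey S) (N := green_mackey S)
  (fun H r s => f H r * s) (fun H r s => f H r * s) mu.
Variable actT : forall H : {group gT}, S H -> T H -> T H.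
Hypotheses (hTmod : is_module actT)
  (hTact : forall (H : {group gT}) s a a', H \subset G ->
     actT H s (mu H a a') = mu H (s * a) a').
Variables (T3 : mackey G) (mu3 : forall H : {group gT}, T H -> S H -> T3 H).
Hypothesis hT3 : is_box_product (N := green_mackey S)
  (fun H r t => actT H (f H r) t) (fun H r s => f H r * s) mu3.
Variable b : forall H : {group gT}, T3 H -> T H.
Hypotheses (hb : is_mackey_map b)
  (hbdef : forall (H : {group gT}) (s1 s2 s3 : S H), H \subset G ->
     b H (mu3 H (mu H s1 s2) s3) =
       mu H (s1 * s2) s3 - mu H s1 (s2 * s3) + mu H (s3 * s1) s2).
Variables (Om : mackey G) (actO : forall H : {group gT}, S H -> Om H -> Om H)
  (d : forall H : {group gT}, S H -> Om H).
Hypothesis hOm : is_kaehler f actO d.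
Implicit Types H K : {group gT}.

Lemma mu3_0l H c : H \subset G -> mu3 H 0 c = 0.
Proof. by move=> sHG; have [bal _] := hT3; apply: (subr_morph0 (pairBl bal _ c sHG)). Qed.

Definition boundaries H (t : T H) : Prop := exists z, t = b H z.

Section KaehlerPairing.
Variable phi : forall H : {group gT}, T H -> Om H.
Hypotheses (phiM : is_mackey_map phi)
  (phi_mu : forall H (s1 s2 : S H), H \subset G -> phi H (mu H s1 s2) = actO H s1 (d H s2)).

Lemma phi_modact H s t : H \subset G -> phi H (actT H s t) = actO H s (phi H t).
Proof.
have [modO _ _] := hOm; have [_ _ phi_tr _] := phiM.
move=> sHG; elim/(box_ind hT): H t / sHG s
  => [H sHG s|H x y sHG IHx IHy s|H K a a' sHG sKH s].
- by rewrite (modact0r hTmod) // (mackey_map0 phiM) // (modact0r modO).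
- by rewrite (modactBr hTmod) // !(mackey_mapB phiM) // IHx IHy (modactBr modO).
have sKG := subset_trans sKH sHG.
rewrite -(mtr_res_modact hTmod) // hTact // !phi_tr // !phi_mu //.
by rewrite (modactM modO) // (mtr_res_modact modO).
Qed.

Lemma phi_boundary_mu3_mu H a a' c : H \subset G -> phi H (b H (mu3 H (mu H a a') c)) = 0.
Proof.
have [modO [_ _ dL] _] := hOm.
move=> sHG; rewrite hbdef // (mackey_mapD phiM) // (mackey_mapB phiM) // !phi_mu //.
rewrite dL // (modactDr modO) // -!(modactM modO) // [c * a]mulrC.
by rewrite opprD addrA subrr sub0r addNr.
Qed.

Lemma phi_boundary_mu3 H t c : H \subset G -> phi H (b H (mu3 H t c)) = 0.
Proof.
have [bal3 _] := hT3; have [_ _ b_tr _] := hb; have [_ _ phi_tr _] := phiM.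
move=> sHG; elim/(box_ind hT): H t / sHG c
  => [H sHG c|H x y sHG IHx IHy c|H K a a' sHG sKH c].
- by rewrite mu3_0l // (mackey_map0 hb) // (mackey_map0 phiM).
- by rewrite (pairBl bal3) // (mackey_mapB hb) // (mackey_mapB phiM) // IHx IHy subrr.
have sKG := subset_trans sKH sHG.
by rewrite -(mtr_pair_resr bal3) // b_tr // phi_tr // phi_boundary_mu3_mu // mtr0.
Qed.

Lemma phi_boundaries H t : H \subset G -> boundaries H t -> phi H t = 0.
Proof.
move=> sHG [z ->].
apply: (box_map_ext hT3 (mackey_map_comp hb phiM) (zero_mackey_map _ _) _ _ z sHG).
exact: phi_boundary_mu3.
Qed.

End KaehlerPairing.

Lemma boundaries_sub_mackey : is_sub_mackey boundaries.
Proof.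
have [bB b_res b_tr b_cj] := hb; split.
- by move=> H sHG; exists 0; rewrite (mackey_map0 hb).
- by move=> H _ _ sHG [z1 ->] [z2 ->]; exists (z1 - z2); rewrite bB.
- by move=> H K _ sHG sKH [z ->]; exists (mres K z); rewrite b_res.
- by move=> K H _ sHG sKH [z ->]; exists (mtr H z); rewrite b_tr.
- by move=> g H K _ sHG gG defK [z ->]; exists (mcj g K z); rewrite b_cj.
Qed.

Lemma boundary_modact_mu3_mu H s a a' c : H \subset G ->
  actT H s (b H (mu3 H (mu H a a') c)) = b H (mu3 H (mu H (s * a) a') c).
Proof.
move=> sHG; rewrite !hbdef // (modactDr hTmod) // (modactBr hTmod) // !hTact //.
by rewrite mulrA [s * (c * a)]mulrCA.
Qed.

Lemma boundaries_modact_mu3 {H} s t c : H \subset G ->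
  boundaries H (actT H s (b H (mu3 H t c))).
Proof.
have [bal3 _] := hT3; have [_ _ b_tr _] := hb.
move=> sHG; elim/(box_ind hT): H t / sHG s c
  => [H sHG s c|H x y sHG IHx IHy s c|H K a a' sHG sKH s c].
- by exists 0; rewrite mu3_0l // (mackey_map0 hb) // (modact0r hTmod).
- have [[z1 e1] [z2 e2]] := (IHx s c, IHy s c); exists (z1 - z2).
  by rewrite (pairBl bal3) // !(mackey_mapB hb) // (modactBr hTmod) // e1 e2.
have sKG := subset_trans sKH sHG.
exists (mtr H (mu3 K (mu K (gres K s * a) a') (gres K c))).
rewrite -(mtr_pair_resr bal3) // !b_tr // -(mtr_res_modact hTmod) //.
by rewrite boundary_modact_mu3_mu.
Qed.

Lemma boundaries_modact H s t : H \subset G -> boundaries H t -> boundaries H (actT H s t).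
Proof.
have [_ _ b_tr _] := hb.
move=> sHG [z {t}->]; elim/(box_ind hT3): H z / sHG s
  => [H sHG s|H x y sHG IHx IHy s|H K t c sHG sKH s].
- by exists 0; rewrite (mackey_map0 hb) // (modact0r hTmod).
- have [[z1 e1] [z2 e2]] := (IHx s, IHy s); exists (z1 - z2).
  by rewrite !(mackey_mapB hb) // (modactBr hTmod) // e1 e2.
have sKG := subset_trans sKH sHG.
have [z ez] := boundaries_modact_mu3 (gres K s) t c sKG.
by exists (mtr H z); rewrite b_tr // -(mtr_res_modact hTmod) // ez b_tr.
Qed.

Local Notation HH1 := (quot_mackey boundaries_sub_mackey).
Local Notation bpi H := (\pi_(quot_mk boundaries_sub_mackey H)).
Local Notation actQ := (quot_act (hP := boundaries_sub_mackey) actT).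

Lemma hh1_module : is_module (M := HH1) actQ.
Proof. exact: quot_module hTmod boundaries_modact. Qed.

Lemma mu1_mackey_map : is_mackey_map (M := green_mackey S) (fun H a => mu H 1 a).
Proof.
have [bal _] := hT; have [res1 _ cj1 _ _] := g_green S.
split=> *.
- exact: (pairBr bal).
- by rewrite (mres_pair bal) //= res1.
- by rewrite -(mtr_pair_resl bal) //= res1.
- by rewrite (mcj_pair bal) //= cj1.
Qed.

Lemma hh1_derivation : is_derivation f (M := HH1) actQ (fun H a => bpi H (mu H 1 a)).
Proof.
have [bal _] := hT.
split=> [|H r sHG|H x y sHG].
- exact: mackey_map_comp mu1_mackey_map (quot_pi_mackey_map _).
- apply/(qpi_eq0 _ _ _ sHG).
  have <- : actT H (f H r) (mu H 1 1) = mu H 1 (f H r).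
    by rewrite hTact // (pair_act bal) //= !mulr1.
  apply: boundaries_modact => //; exists (mu3 H (mu H 1 1) 1).
  by rewrite hbdef // !mulr1 subrr add0r.
rewrite !(quot_actE _ hTmod boundaries_modact) // !hTact // !mulr1.
apply/eqP; rewrite -subr_eq0 -qpiD -qpiB; apply/eqP/(qpi_eq0 _ _ _ sHG).
(* b (1 ⊗ x ⊗ y) = x ⊗ y - 1 ⊗ xy + y ⊗ x *)
exists (- mu3 H (mu H 1 x) y).
by rewrite (mackey_mapN hb) // hbdef // mul1r mulr1 opprD addrA [RHS]opprD opprB.
Qed.

Section Inverse.
Variables (phi : forall H : {group gT}, T H -> Om H) (psi : forall H : {group gT}, Om H -> HH1 H).
Hypotheses (phiM : is_mackey_map phi)
  (phi_mu : forall H (s1 s2 : S H), H \subset G -> phi H (mu H s1 s2) = actO H s1 (d H s2))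
  (psiM : is_module_map (N := HH1) actO actQ psi)
  (psi_d : forall H a, H \subset G -> psi H (d H a) = bpi H (mu H 1 a)).

Lemma psi_phi H t : H \subset G -> psi H (phi H t) = bpi H t.
Proof.
have [psiMack psi_act] := psiM; move=> sHG.
apply: (box_map_ext hT (mackey_map_comp phiM psiMack) (quot_pi_mackey_map _) _ _ t sHG).
move=> K a a' sKG /=.
rewrite phi_mu // psi_act // psi_d // (quot_actE _ hTmod boundaries_modact) //.
by rewrite hTact // mulr1.
Qed.

Lemma quot_lift_phi_psi H y : H \subset G -> quot_lift phi H (psi H y) = y.
Proof.
have [modO _ _] := hOm.
have phi_bd := phi_boundaries phiM phi_mu.
have phibarM := quot_lift_module_map boundaries_sub_mackey phiM phi_bd actO hTmod
  boundaries_modact (phi_modact phiM phi_mu).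
move=> sHG; apply: (kaehler_map_ext hOm modO (module_map_comp psiM phibarM)
  (module_map_id actO) _ _ y sHG) => K a sKG.
by rewrite psi_d // (quot_liftE _ phiM phi_bd) // phi_mu // (modact1 modO).
Qed.

End Inverse.

End HochschildKaehler.

Theorem mainTheorem5 (gT : finGroupType) (G : {group gT})
  (R S : green G) (f : forall H, R H -> S H) (hf : is_green_map f)
  (T : mackey G) (mu : forall H, S H -> S H -> T H)
  (hT : is_box_product (M := green_mackey S) (N := green_mackey S)
          (fun H r s => f H r * s) (fun H r s => f H r * s) mu)
  (actT : forall H, S H -> T H -> T H) (hTmod : is_module actT)
  (hTact : forall (H : {group gT}) s a a', H \subset G ->
             actT H s (mu H a a') = mu H (s * a) a')
  (T3 : mackey G) (mu3 : forall H, T H -> S H -> T3 H)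
  (hT3 : is_box_product (N := green_mackey S)
          (fun H r t => actT H (f H r) t) (fun H r s => f H r * s) mu3)
  (b : forall H, T3 H -> T H) (hb : is_mackey_map b)
  (hbdef : forall (H : {group gT}) (s1 s2 s3 : S H), H \subset G ->
     b H (mu3 H (mu H s1 s2) s3) =
       mu H (s1 * s2) s3 - mu H s1 (s2 * s3) + mu H (s3 * s1) s2)
  (Om : mackey G) (actO : forall H, S H -> Om H -> Om H)
  (d : forall H, S H -> Om H) (hOm : is_kaehler f actO d) :
  exists phi : forall H, T H -> Om H,
    [/\ is_module_map actT actO phi,
        forall (H : {group gT}) (s1 s2 : S H), H \subset G ->
          phi H (mu H s1 s2) = actO H s1 (d H s2),
        forall (H : {group gT}) (y : Om H), H \subset G ->
          exists t, phi H t = y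
      & forall (H : {group gT}) (t : T H), H \subset G ->
          phi H t = 0 <-> exists z, t = b H z].
Proof.
have [modO derO univO] := hOm.
have [phi [phiM phi_mu _]] := hT.2 Om _ (derivation_pairing_balanced modO derO).
have [psi [psiM psi_d _]] := univO _ _ _ (hh1_module f hT hTmod hTact hT3 hb hbdef)
  (hh1_derivation f hT hTmod hTact hT3 hb hbdef).
exists phi; split=> // [|H y sHG|H t sHG].
- by split=> // H s t; apply: (phi_modact hT hTmod hTact hOm phiM phi_mu).
- exists (generic_quotient.repr (psi H y)).
  exact: (quot_lift_phi_psi hT hTmod hTact hT3 hbdef hOm phiM phi_mu psiM psi_d).
split=> [phi_t0|]; last exact: (phi_boundaries hT actT hT3 hb hbdef hOm phiM phi_mu).
apply/(qpi_eq0 (boundaries_sub_mackey hb) _ _ sHG).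
rewrite -(psi_phi f hT hTmod hTact hT3 hbdef d phiM phi_mu psiM psi_d) // phi_t0.
exact: (mackey_map0 psiM.1).
Qed.
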